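(* Let $X$ be a real Hausdorff locally convex topological vector space, let $V\subseteq X$ be convex and let $U\subseteq V$ be self-segment-dense in $V$. Then for every subset $\mathcal S\subseteq U$ one has $\operatorname{cl}(\operatorname{co}(\mathcal S)\cap U)=\operatorname{cl}(\operatorname{co}(\mathcal S))$; moreover, $\operatorname{co}(\mathcal S)\cap U$ is self-segment-dense in $\operatorname{co}(\mathcal S)$.
   Context: $\operatorname{co}$ denotes the convex hull and $\operatorname{cl}$ the closure. For $x,y\in X$, $[x,y]=\{x+t(y-x):t\in[0,1]\}$. A set $P$ is dense in $D$ if $D\subseteq\operatorname{cl}(P)$. Definition (self-segment-dense): for a convex set $V\subseteq X$ and $U\subseteq V$, $U$ is self-segment-dense in $V$ if $U$ is dense in $V$ and for all $x,y\in U$ the set $[x,y]\cap U$ is dense in $[x,y]$. *)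

From Stdlib Require Import Reals.
Open Scope R_scope.

Class LCTVS (X : Type) := {
  vadd : X -> X -> X;
  vscal : R -> X -> X;
  vzero : X;
  vopp : X -> X;
  vadd_assoc : forall x y z, vadd x (vadd y z) = vadd (vadd x y) z;
  vadd_comm : forall x y, vadd x y = vadd y x;
  vadd_0 : forall x, vadd x vzero = x;
  vadd_opp : forall x, vadd x (vopp x) = vzero;
  vscal_1 : forall x, vscal 1 x = x;
  vscal_assoc : forall a b x, vscal a (vscal b x) = vscal (a * b) x;
  vscal_distr_v : forall a x y, vscal a (vadd x y) = vadd (vscal a x) (vscal a y);
  vscal_distr_s : forall a b x, vscal (a + b) x = vadd (vscal a x) (vscal b x);
  is_open : (X -> Prop) -> Prop;
  open_full : is_open (fun _ => True);
  open_inter : forall A B, is_open A -> is_open B -> is_open (fun x => A x /\ B x);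
  open_union : forall (F : (X -> Prop) -> Prop),
      (forall A, F A -> is_open A) -> is_open (fun x => exists A, F A /\ A x);
  vadd_cont : forall x y (W : X -> Prop), is_open W -> W (vadd x y) ->
      exists A B : X -> Prop, is_open A /\ is_open B /\ A x /\ B y /\
        (forall u v, A u -> B v -> W (vadd u v));
  vscal_cont : forall a x (W : X -> Prop), is_open W -> W (vscal a x) ->
      exists (d : R) (A : X -> Prop), 0 < d /\ is_open A /\ A x /\
        (forall b u, Rabs (b - a) < d -> A u -> W (vscal b u));
  hausdorff : forall x y, x <> y ->
      exists A B : X -> Prop, is_open A /\ is_open B /\ A x /\ B y /\
        (forall z, A z -> B z -> False);
  locally_convex : forall W : X -> Prop, is_open W -> W vzero ->
      exists C : X -> Prop, is_open C /\ C vzero /\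
        (forall z, C z -> W z) /\
        (forall x y t, C x -> C y -> 0 <= t <= 1 ->
           C (vadd x (vscal t (vadd y (vopp x)))))
}.

Section Notions.
Context {X : Type} `{LCTVS X}.

Definition segment (x y : X) : X -> Prop :=
  fun z => exists t, 0 <= t <= 1 /\ z = vadd x (vscal t (vadd y (vopp x))).

Definition convex (C : X -> Prop) : Prop :=
  forall x y z, C x -> C y -> segment x y z -> C z.

Definition co (S : X -> Prop) : X -> Prop :=
  fun z => forall C, convex C -> (forall s, S s -> C s) -> C z.

Definition cl (P : X -> Prop) : X -> Prop :=
  fun z => forall O, is_open O -> O z -> exists p, P p /\ O p.

Definition dense (P D : X -> Prop) : Prop := forall z, D z -> cl P z.

Definition self_segment_dense (U V : X -> Prop) : Prop :=
  dense U V /\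
  forall x y, U x -> U y ->
    dense (fun z => segment x y z /\ U z) (segment x y).

End Notions.

(* The closure of [P := co S ∩ U] is convex: near a point of a segment
   between two points of [cl P] lies a point of a segment between two points
   of [P], and such segments lie in [cl P] because [U] is dense in its
   segments and [co S] contains them.  As [S ⊆ P], minimality of the convex
   hull gives [co S ⊆ cl P], from which both claims follow. *)

From Stdlib Require Import Reals.

Section LinearFacts.
Context {X : Type} `{LCTVS X}.

Lemma vscal_0 x : vscal 0 x = vzero.
Proof.
  assert (E : vadd (vscal 0 x) (vopp (vscal 0 x)) =
               vadd (vadd (vscal 0 x) (vscal 0 x)) (vopp (vscal 0 x))).
  { rewrite <- vscal_distr_s, Rplus_0_r. reflexivity. }
  rewrite <- vadd_assoc, vadd_opp, vadd_0 in E. symmetry. exact E.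
Qed.

Lemma vopp_scal x : vopp x = vscal (-1) x.
Proof.
  assert (E : vadd x (vscal (-1) x) = vzero).
  { rewrite <- (vscal_1 x) at 1. rewrite <- vscal_distr_s.
    replace (1 + -1) with 0 by ring. apply vscal_0. }
  rewrite <- (vadd_0 (vopp x)), <- E, vadd_assoc, (vadd_comm (vopp x) x),
    vadd_opp, vadd_comm, vadd_0.
  reflexivity.
Qed.

Lemma segment_point_continuous t a b (O : X -> Prop) :
  is_open O -> O (vadd a (vscal t (vadd b (vopp a)))) ->
  exists A B : X -> Prop, is_open A /\ is_open B /\ A a /\ B b /\
    forall u v, A u -> B v -> O (vadd u (vscal t (vadd v (vopp u)))).
Proof.
  intros HO Oz.
  destruct (vadd_cont _ _ _ HO Oz) as (A1 & W & HA1 & HW & A1a & Ww & HAW).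
  destruct (vscal_cont _ _ _ HW Ww) as (d & D & Hd & HD & Dd & HWD).
  destruct (vadd_cont _ _ _ HD Dd) as (B & N & HB & HN & Bb & Na & HBN).
  rewrite vopp_scal in Na.
  destruct (vscal_cont _ _ _ HN Na) as (d' & A2 & Hd' & HA2 & A2a & HNA).
  exists (fun u => A1 u /\ A2 u), B.
  repeat split; auto using open_inter.
  intros u v [A1u A2u] Bv. apply HAW; auto. apply HWD.
  - rewrite Rminus_diag, Rabs_R0. exact Hd.
  - apply HBN; auto. rewrite vopp_scal. apply HNA; auto.
    rewrite Rminus_diag, Rabs_R0. exact Hd'.
Qed.

End LinearFacts.

Section Closure.
Context {X : Type} `{LCTVS X}.

Lemma subset_cl (P : X -> Prop) z : P z -> cl P z.
Proof. intros Pz O _ Oz. exists z. auto. Qed.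

Lemma cl_sub (P Q : X -> Prop) :
  (forall z, P z -> cl Q z) -> forall z, cl P z -> cl Q z.
Proof.
  intros PQ z Pz O HO Oz.
  destruct (Pz O HO Oz) as (p & Pp & Op).
  exact (PQ p Pp O HO Op).
Qed.

Lemma cl_mono (P Q : X -> Prop) :
  (forall z, P z -> Q z) -> forall z, cl P z -> cl Q z.
Proof. intros PQ. apply cl_sub. intros z Pz. apply subset_cl, PQ, Pz. Qed.

Lemma convex_cl (P : X -> Prop) :
  (forall x y, P x -> P y -> dense P (segment x y)) -> convex (cl P).
Proof.
  intros segP a b z Pa Pb [t [Ht ->]] O HO Oz.
  destruct (segment_point_continuous t a b O HO Oz)
    as (A & B & HA & HB & Aa & Bb & HAB).
  destruct (Pa A HA Aa) as (a' & Pa' & Aa').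
  destruct (Pb B HB Bb) as (b' & Pb' & Bb').
  refine (segP a' b' Pa' Pb' _ _ O HO (HAB a' b' Aa' Bb')). exists t. auto.
Qed.

End Closure.

Section ConvexHull.
Context {X : Type} `{LCTVS X}.

Lemma co_convex (S : X -> Prop) : convex (co S).
Proof. intros x y z Sx Sy xyz C HC SC. exact (HC x y z (Sx C HC SC) (Sy C HC SC) xyz). Qed.

Lemma subset_co (S : X -> Prop) s : S s -> co S s.
Proof. intros Ss C _ SC. auto. Qed.

Lemma co_min (S C : X -> Prop) :
  convex C -> (forall s, S s -> C s) -> forall z, co S z -> C z.
Proof. intros HC SC z Sz. exact (Sz C HC SC). Qed.

End ConvexHull.

Theorem mainTheorem1 (X : Type) (HX : LCTVS X) (V U : X -> Prop) :
  convex V ->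
  (forall u, U u -> V u) ->
  self_segment_dense U V ->
  forall S : X -> Prop, (forall s, S s -> U s) ->
    (forall z, cl (fun w => co S w /\ U w) z <-> cl (co S) z) /\
    self_segment_dense (fun w => co S w /\ U w) (co S).
Proof.
  intros _ _ [_ segU] S SU.
  set (P := fun w => co S w /\ U w).
  assert (segP : forall x y, P x -> P y ->
            dense (fun z => segment x y z /\ P z) (segment x y)).
  { intros x y [Sx Ux] [Sy Uy] z xyz.
    apply (cl_mono (fun z => segment x y z /\ U z)); [|exact (segU x y Ux Uy z xyz)].
    intros w [xyw Uw]. repeat split; auto. exact (co_convex S x y w Sx Sy xyw). }
  assert (coP : forall z, co S z -> cl P z).
  { apply co_min.
    - apply convex_cl. intros x y Px Py z xyz.
      apply (cl_mono (fun z => segment x y z /\ P z)); [tauto | exact (segP x y Px Py z xyz)].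
    - intros s Ss. apply subset_cl. split; auto using subset_co. }
  split; [|split; assumption].
  intros z. split.
  - apply cl_mono. intros w [Sw _]. exact Sw.
  - apply cl_sub. exact coP.
Qed.
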